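(* Let $\mathcal{X}$ and $\mathcal{Y}$ be finite subsets of $\mathbb{R}$, each with $N$ elements. Let $S$ be a binary random variable with values $s_0,s_1$, $\mathbb{P}(S=s_0)>0$, $\mathbb{P}(S=s_1)>0$, and $X$ a random variable with values in $\mathcal{X}$ with $P^X_i=\mathbb{P}(X=i)>0$ for all $i\in\mathcal{X}$. Let $P^{X_{s}}_i=\mathbb{P}(X=i\mid S=s)$ for $s\in\{s_0,s_1\}$ (equal to $0$ for $i$ outside the support of $X$ given $S=s$). Let $P^{\tilde X}\in\mathbb{R}^{\mathcal{Y}}$ be a probability vector, $\gamma\in\Pi(P^X,P^{\tilde X})$, and let $\tilde X$ be the projected variable defined by: conditionally on $(X,S)=(i,s)$, $\tilde X=j$ with probability $\gamma_{i,j}/P^X_i$. Write $P^{\tilde X_s}_j=\mathbb{P}(\tilde X=j\mid S=s)$ and define the vector $V\in\mathbb{R}^{\mathcal{X}}$ by $$V=\frac{P^{X_{s_0}}-P^{X_{s_1}}}{P^X}\quad(\text{element-wise}).$$ Then $P^{\tilde X_{s_0}}-P^{\tilde X_{s_1}}=\gamma' V$. Consequently, if total repair holds, i.e. $P^{\tilde X_{s_0}}=P^{\tilde X_{s_1}}$, then the coupling satisfies $\gamma'V=\mathbb{0}$, where $\mathbb{0}\in\mathbb{R}^{N}$ is the zero vector.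
   Context: For probability vectors $P,Q$, $\Pi(P,Q)=\{\gamma\in\mathbb{R}_+^{\mathcal{X}\times\mathcal{Y}}:\gamma\mathbb{1}=P,\ \gamma'\mathbb{1}=Q\}$, where $\mathbb{1}$ is the all-ones vector and $\gamma'$ the transpose. ''Total repair'' means the conditional distributions of the projected feature $\tilde X$ given $S=s_0$ and given $S=s_1$ coincide. *)

From HB Require Import structures.
From mathcomp Require Import all_boot all_order all_algebra.
Set Implicit Arguments. Unset Strict Implicit. Unset Printing Implicit Defensive.
Import Order.TTheory GRing.Theory Num.Theory.
Local Open Scope ring_scope.

(* The alphabets X and Y (each of size N) are
   indexed by 'I_N; the sensitive attribute S takes values in bool
   (s0 := true, s1 := false). *)

Definition is_joint_law (R : realFieldType) (N : nat) (p : 'I_N -> bool -> R) :=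
  (forall i s, 0 <= p i s) /\ \sum_(i < N) \sum_(s : bool) p i s = 1.

Definition is_prob_vec (R : realFieldType) (N : nat) (Q : 'I_N -> R) :=
  (forall j, 0 <= Q j) /\ \sum_(j < N) Q j = 1.

Definition PS (R : realFieldType) (N : nat) (p : 'I_N -> bool -> R) (s : bool) : R :=
  \sum_(i < N) p i s.

Definition PX (R : realFieldType) (N : nat) (p : 'I_N -> bool -> R) (i : 'I_N) : R :=
  \sum_(s : bool) p i s.

Definition PXs (R : realFieldType) (N : nat) (p : 'I_N -> bool -> R) (s : bool) (i : 'I_N) : R :=
  p i s / PS p s.

Definition coupling (R : realFieldType) (N : nat) (P Q : 'I_N -> R) (g : 'M[R]_N) :=
  (forall i j, 0 <= g i j) /\
  (forall i, \sum_(j < N) g i j = P i) /\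
  (forall j, \sum_(i < N) g i j = Q j).

(* joint law of (X, S, Xtilde): P(X=i, S=s, Xtilde=j) = P(X=i,S=s) * g_ij / P^X_i *)
Definition proj_joint (R : realFieldType) (N : nat) (p : 'I_N -> bool -> R) (g : 'M[R]_N)
  (i : 'I_N) (s : bool) (j : 'I_N) : R :=
  p i s * (g i j / PX p i).

Definition PXts (R : realFieldType) (N : nat) (p : 'I_N -> bool -> R) (g : 'M[R]_N)
  (s : bool) (j : 'I_N) : R :=
  (\sum_(i < N) \sum_(s' : bool | s' == s) proj_joint p g i s' j) / PS p s.

Definition Vvec (R : realFieldType) (N : nat) (p : 'I_N -> bool -> R) : 'cV[R]_N :=
  \col_i ((PXs p true i - PXs p false i) / PX p i).

Definition total_repair (R : realFieldType) (N : nat) (p : 'I_N -> bool -> R) (g : 'M[R]_N) :=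
  forall j, PXts p g true j = PXts p g false j.

From HB Require Import structures.
From mathcomp Require Import all_boot all_order all_algebra.
From mathcomp Require Import ring.
Import Order.TTheory GRing.Theory Num.Theory.
Local Open Scope ring_scope.

(* Conditioning on S = s only rescales p i s by 1 / P(S = s), so
   P(Xtilde = j | S = s) = sum_i g_ij P(X = i | S = s) / P^X_i; subtracting the
   two conditional laws is linear, which gives the i-sum of g_ij V_i. *)

Section ProjectedConditionals.

Variables (R : realFieldType) (N : nat) (p : 'I_N -> bool -> R) (g : 'M[R]_N).

(* A purely field-theoretic rearrangement: it needs no positivity, because
   the junk values x / 0 = 0 occur identically on both sides. *)
Lemma PXtsE s j : PXts p g s j = \sum_(i < N) g i j * (PXs p s i / PX p i).
Proof.
rewrite /PXts mulr_suml; apply: eq_bigr => i _.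
by rewrite big_pred1_eq /proj_joint /PXs; ring.
Qed.

Lemma PXts_diff_mulmx :
  \col_j (PXts p g true j - PXts p g false j) = g^T *m Vvec p.
Proof.
apply/matrixP => j k; rewrite !mxE !PXtsE -sumrB.
by apply: eq_bigr => i _; rewrite !mxE; ring.
Qed.

Lemma total_repair_mulmx : total_repair p g -> g^T *m Vvec p = 0.
Proof.
move=> repair; rewrite -PXts_diff_mulmx.
by apply/matrixP => j k; rewrite !mxE repair subrr.
Qed.

End ProjectedConditionals.

Theorem mainTheorem2 (R : realFieldType) (N : nat)
  (p : 'I_N -> bool -> R) (Ptil : 'I_N -> R) (g : 'M[R]_N) :
  is_joint_law p ->
  0 < PS p true -> 0 < PS p false ->
  (forall i, 0 < PX p i) ->
  is_prob_vec Ptil ->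
  coupling (PX p) Ptil g ->
  (\col_j (PXts p g true j - PXts p g false j) = g^T *m Vvec p) /\
  (total_repair p g -> g^T *m Vvec p = 0).
Proof.
move=> _ _ _ _ _ _.
by split; [exact: PXts_diff_mulmx | exact: total_repair_mulmx].
Qed.
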